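(* Let $G$ be a finite group and let $\{M_1,\dots,M_t\}$ be a maximal irredundant family of maximal subgroups of $G$. Then $\mathrm{core}_G(M_1\cap\dots\cap M_t)=\Phi(G)$, where $\Phi(G)$ is the Frattini subgroup of $G$ and $\mathrm{core}_G(X)$ is the largest normal subgroup of $G$ contained in $X$.
   Context: A set $\mathcal X$ of maximal subgroups of $G$ is irredundant if the intersection of the members of $\mathcal X$ is not equal to the intersection of the members of any proper subset of $\mathcal X$. An irredundant set is maximal irredundant if it is not properly contained in any other irredundant set of maximal subgroups of $G$. *)

From mathcomp Require Import all_boot all_fingroup all_solvable.
Set Implicit Arguments. Unset Strict Implicit. Unset Printing Implicit Defensive.
Local Open Scope group_scope.

(* Intersection of a family X of subsets of G, taken inside G
   (so the empty family has intersection G). *)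
Definition famcap (gT : finGroupType) (G : {set gT}) (X : {set {set gT}}) : {set gT} :=
  G :&: \bigcap_(M in X) M.

Definition irredundant (gT : finGroupType) (G : {set gT}) (X : {set {set gT}}) : Prop :=
  (forall M, M \in X -> maximal M G) /\
  (forall Y : {set {set gT}}, Y \proper X -> famcap G Y != famcap G X).

Definition max_irredundant (gT : finGroupType) (G : {set gT}) (X : {set {set gT}}) : Prop :=
  irredundant G X /\
  (forall Z : {set {set gT}}, X \proper Z -> ~ irredundant G Z).

From mathcomp Require Import all_boot all_fingroup all_solvable.
Local Open Scope group_scope.
Set Implicit Arguments. Unset Strict Implicit.

(* Phi(G) lies in every maximal subgroup and is normal, so it lies in the core
   N of D = M_1 ∩ ... ∩ M_t.  Conversely, let M be maximal with N not in M.
   Then M is not among the M_i, so by maximality X ∪ {M} is redundant: some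
   proper subfamily Y has intersection D ∩ M.  As NM = G and N ≤ D, Dedekind's
   modular law shows that W = Y \ {M} still has intersection D, so W = X by
   irredundance; hence Y = X and D ≤ M, contradicting N ≤ D. *)

Section Famcap.

Variables (gT : finGroupType) (G : {group gT}).
Implicit Types (A M : {set gT}) (X Y : {set {set gT}}).

Lemma famcapP Y x :
  reflect (x \in G /\ forall M, M \in Y -> x \in M) (x \in famcap G Y).
Proof. by rewrite inE; apply: (iffP andP) => -[xG /bigcapP]. Qed.

Lemma famcap_sub Y : famcap G Y \subset G.
Proof. exact: subsetIl. Qed.

Lemma famcapS X Y : X \subset Y -> famcap G Y \subset famcap G X.
Proof.
move=> sXY; apply/subsetP=> x /famcapP[xG xY]; apply/famcapP; split=> // M MX.
exact/xY/(subsetP sXY).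
Qed.

Lemma famcapU1 A Y : famcap G (A |: Y) = A :&: famcap G Y.
Proof.
apply/setP=> x; rewrite [RHS]inE.
apply/famcapP/andP=> [[xG xAY] | [xA /famcapP[xG xY]]].
  split; first by apply: xAY; rewrite setU11.
  by apply/famcapP; split=> // M MY; apply: xAY; rewrite setU1r.
by split=> // M; case/setU1P=> [-> | /xY].
Qed.

Lemma famcap_group_set Y : {in Y, forall M, group_set M} -> group_set (famcap G Y).
Proof.
move=> gY; apply/group_setP; split.
  by apply/famcapP; split=> // M /gY gM; exact: (group1 (Group gM)).
move=> x y /famcapP[xG xY] /famcapP[yG yY]; apply/famcapP; split; first exact: groupM.
by move=> M MY; have gM := gY M MY; exact: (groupM (G := Group gM)) (xY M MY) (yY M MY).
Qed.

Lemma maximal_group_set M : maximal M G -> group_set M.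
Proof. by case/maxsetP => /andP[]. Qed.

Lemma Phi_sub_famcap X : {in X, forall M, maximal M G} -> 'Phi(G) \subset famcap G X.
Proof.
move=> maxX; apply/subsetP=> x xPhi; apply/famcapP; split=> [|M MX].
  exact: subsetP (Phi_sub G) x xPhi.
have maxM := maxX M MX.
exact: subsetP (Phi_sub_max (M := Group (maximal_group_set maxM)) maxM) x xPhi.
Qed.

Lemma irredundant_famcap_eq X Y :
  irredundant G X -> Y \subset X -> famcap G Y = famcap G X -> Y = X.
Proof.
case=> _ irrX sYX eqYX; apply/eqP; apply: contraT => neYX.
by have := irrX Y; rewrite properEneq neYX sYX eqYX eqxx => /(_ isT).
Qed.

Lemma max_irredundant_setU1 X M :
  max_irredundant G X -> maximal M G -> M \notin X ->
  exists2 Y : {set {set gT}}, Y \proper M |: X & famcap G Y = M :&: famcap G X.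
Proof.
case=> -[maxX _] maxirrX maxM MnX.
have pXMX : X \proper M |: X.
  by rewrite properEneq subsetUr andbT; apply: contraNneq MnX => ->; rewrite setU11.
have maxMX : {in M |: X, forall K, maximal K G} by move=> K /setU1P[-> | /maxX].
have /exists_inP[Y pY /eqP eqY] :
    [exists (Y : {set {set gT}} | Y \proper M |: X), famcap G Y == M :&: famcap G X].
  apply: contraT => /exists_inPn noY; exfalso.
  by apply: (maxirrX _ pXMX); split=> // Y /noY; rewrite famcapU1.
by exists Y.
Qed.

End Famcap.

Lemma modular_subset (gT : finGroupType) (H K N : {group gT}) (M : {set gT}) :
  N \subset H -> H \subset N * M -> H :&: M \subset K -> N \subset K -> H \subset K.
Proof.
move=> sNH sHNM sHMK sNK.
by rewrite -(setIidPr sHNM) -group_modl // mul_subG // setIC.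
Qed.

Lemma mulg_normal_not_sub_maximal (gT : finGroupType) (G N M : {group gT}) :
  N <| G -> maximal M G -> ~~ (N \subset M) -> N * M = G.
Proof.
case/andP=> sNG nNG /maxgroupP[/proper_sub sMG maxM] nsNM.
apply/eqP; rewrite eqEproper mul_subG // -norm_joinEr ?(subset_trans sMG) //.
by apply: contra nsNM => /maxM <-; rewrite ?joing_subl ?joing_subr.
Qed.

Lemma gcore_famcap_sub_maximal (gT : finGroupType) (G M : {group gT})
    (X : {set {set gT}}) :
  max_irredundant G X -> maximal M G -> gcore (famcap G X) G \subset M.
Proof.
move=> maxirrX maxM; have [[maxX _] _] := maxirrX.
pose D := Group (famcap_group_set G (fun K KX => maximal_group_set (maxX K KX))).
change (gcore D G \subset M); set N := gcore D G.
have sND : N \subset D := gcore_sub D G.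
have nsNG : N <| G := gcore_normal (famcap_sub G X).
apply/idPn => nsNM.
have MnX : (M : {set gT}) \notin X.
  by apply: contra nsNM => MX; apply: subset_trans sND _;
     apply/subsetP=> x /famcapP[_]; apply.
have [Y pY eqY] := max_irredundant_setU1 maxirrX maxM MnX.
have defG : N * M = G := mulg_normal_not_sub_maximal nsNG maxM nsNM.
set W := Y :\ (M : {set gT}).
have sYMW : Y \subset (M : {set gT}) |: W by rewrite -subDset.
have sWX : W \subset X by rewrite subDset; exact: proper_sub pY.
have maxW : {in W, forall K, maximal K G} by move=> K /(subsetP sWX) /maxX.
pose DW := Group (famcap_group_set G (fun K KW => maximal_group_set (maxW K KW))).
have eqWX : W = X.
  apply: (irredundant_famcap_eq (proj1 maxirrX) sWX); apply/eqP.
  rewrite eqEsubset (famcapS G sWX) andbT.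
  apply: (@modular_subset _ DW D N M _ _ _ sND).
  - exact: subset_trans sND (famcapS G sWX).
  - by rewrite defG famcap_sub.
  - rewrite setIC -famcapU1; apply: subset_trans (famcapS G sYMW) _.
    by rewrite eqY subsetIr.
have MnY : (M : {set gT}) \notin Y.
  by apply: contraL pY => MY; rewrite -eqWX /W setD1K // properxx.
have sYX : Y \subset X.
  rewrite -eqWX; apply/subsetP=> K KY; rewrite in_setD1 KY andbT.
  by apply: contraNneq MnY => <-.
apply: (negP nsNM); apply: subset_trans sND _.
by apply: subset_trans (famcapS G sYX) _; rewrite eqY subsetIl.
Qed.

Theorem mainTheorem2 (gT : finGroupType) (G : {group gT}) (X : {set {set gT}}) :
  max_irredundant G X -> gcore (famcap G X) G = 'Phi(G).
Proof.
move=> maxirrX; have [[maxX _] _] := maxirrX.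
apply/eqP; rewrite eqEsubset; apply/andP; split.
  apply/bigcapsP=> M /predU1P[-> | maxM].
    exact: subset_trans (gcore_sub _ _) (famcap_sub G X).
  exact: gcore_famcap_sub_maximal maxM.
apply: gcore_max; first exact: Phi_sub_famcap.
by case/andP: (Phi_normal G).
Qed.
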